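(* Let $p$ be a ProbNetKAT program, $S=\mathcal{S}[\![p]\!]$ and $U$ as defined in the context. Then for every $n\ge1$: (1) $(SU)^n = S^nU$; (2) $SU$ is an absorbing Markov chain whose absorbing states are exactly the states $(\emptyset,b)$ for $b\subseteq\mathsf{Pk}$.
   Context: $\mathsf{Pk}$ is a finite set of packets; $[\varphi]$ is the Iverson bracket. For a ProbNetKAT program $p$, $\mathcal{B}[\![p]\!]\in[0,1]^{2^{\mathsf{Pk}}\times 2^{\mathsf{Pk}}}$ is its stochastic matrix semantics ($\mathcal{B}[\![p]\!]_{ab}$ = probability of output set $b$ on input set $a$); in particular every program maps input $\emptyset$ to output $\emptyset$ with probability 1. The small-step matrix on states $(a,b)\in 2^{\mathsf{Pk}}\times 2^{\mathsf{Pk}}$ is $S_{(a,b),(a',b')}=[b'=b\cup a]\,\mathcal{B}[\![p]\!]_{a,a'}$. A state $(a,b)$ is saturated if whenever $(S^n)_{(a,b),(a',b')}>0$ for some $n\ge0$ we have $b'=b$. $U_{(a,b),(a',b')}=[b'=b][a'=\emptyset]$ if $(a,b)$ is saturated, and $[b'=b][a'=a]$ otherwise. A state $s$ of a Markov chain $T$ is absorbing if $T_{s,s'}=[s=s']$ for all $s'$; $T$ is an absorbing Markov chain if from every state some absorbing state is reachable ($T^n_{s,s'}>0$ for some $n\ge0$ and absorbing $s'$). *)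

From HB Require Import structures.
From mathcomp Require Import all_boot all_order all_algebra.
From mathcomp Require Import boolp reals.
Set Implicit Arguments. Unset Strict Implicit. Unset Printing Implicit Defensive.
Import Order.TTheory GRing.Theory Num.Theory.
Local Open Scope ring_scope.

Definition mat (R : realType) (T : finType) := T -> T -> R.

Definition mxid (R : realType) (T : finType) : mat R T :=
  fun i j => (i == j)%:R.

Definition mxmulF (R : realType) (T : finType) (M N : mat R T) : mat R T :=
  fun i j => \sum_(k : T) M i k * N k j.

Fixpoint mxpowF (R : realType) (T : finType) (M : mat R T) (n : nat) : mat R T :=
  match n with
  | O => @mxid R T
  | S n' => mxmulF M (mxpowF M n')
  end.

Definition stochastic (R : realType) (T : finType) (M : mat R T) : Prop :=
  (forall i j, 0 <= M i j) /\ (forall i, \sum_(j : T) M i j = 1).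

(* Hypotheses on the big-step semantics B[[p]] of a ProbNetKAT program:
   a stochastic matrix on 2^Pk mapping input set0 to output set0 w.p. 1. *)
Definition bigstep_like (R : realType) (Pk : finType)
  (B : mat R {set Pk}) : Prop :=
  stochastic B /\ (forall b, B set0 b = (b == set0)%:R).

Definition state (Pk : finType) := ({set Pk} * {set Pk})%type.

Definition smallstep (R : realType) (Pk : finType) (B : mat R {set Pk})
  : mat R (state Pk) :=
  fun s s' => (s'.2 == s.2 :|: s.1)%:R * B s.1 s'.1.

Definition saturated (R : realType) (Pk : finType) (B : mat R {set Pk})
  (s : state Pk) : Prop :=
  forall (n : nat) (s' : state Pk),
    0 < mxpowF (smallstep B) n s s' -> s'.2 = s.2.

Definition Umx (R : realType) (Pk : finType) (B : mat R {set Pk})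
  : mat R (state Pk) :=
  fun s s' =>
    if `[< saturated B s >]
    then ((s'.2 == s.2) && (s'.1 == set0))%:R
    else ((s'.2 == s.2) && (s'.1 == s.1))%:R.

Definition absorbing (R : realType) (T : finType) (M : mat R T) (s : T) : Prop :=
  forall s', M s s' = (s == s')%:R.

Definition absorbing_chain (R : realType) (T : finType) (M : mat R T) : Prop :=
  stochastic M /\
  (forall s, exists (n : nat) (s' : T), absorbing M s' /\ 0 < mxpowF M n s s').

From HB Require Import structures.
From mathcomp Require Import all_boot all_order all_algebra.
From mathcomp Require Import boolp reals.
Import Order.TTheory GRing.Theory Num.Theory.
Local Open Scope ring_scope.
Set Implicit Arguments. Unset Strict Implicit.

(* S only enlarges the second component, so from any state a saturated one is
   reached after at most |Pk| increases. U sends a saturated state (a, b) to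
   (∅, b), which is absorbing for both S and U; on the states reachable from a
   saturated state U acts like the single jump to that (∅, b), whence
   U S^n U = S^n U and (SU)^n = S^n U. The absorbing states of SU are exactly
   the (∅, b): a state (a, b) with a ≠ ∅ fixed by SU could only step to itself
   under S, hence would be saturated, and U would then move it away. *)

Section MatrixAlgebra.
Variables (R : realType) (T : finType).
Implicit Types (M N P : mat R T) (f : T -> T).

Definition mxfun f : mat R T := fun i j => (f i == j)%:R.

Lemma sum_delta (t : T) (F : T -> R) : \sum_k (t == k)%:R * F k = F t.
Proof.
rewrite (bigD1 t) //= eqxx mul1r big1 ?addr0 // => k /negbTE.
by rewrite eq_sym => ->; rewrite mul0r.
Qed.

Lemma mxmulF_delta_row M N i t :
  (forall k, M i k = (t == k)%:R) -> forall j, mxmulF M N i j = N t j.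
Proof.
by move=> Mi j; rewrite /mxmulF; under eq_bigr do rewrite Mi; rewrite sum_delta.
Qed.

Lemma mxmulFA M N P : mxmulF (mxmulF M N) P = mxmulF M (mxmulF N P).
Proof.
apply/funext=> i; apply/funext=> j; rewrite /mxmulF.
under eq_bigr do rewrite big_distrl /=.
rewrite exchange_big /=; apply: eq_bigr => l _.
by rewrite big_distrr /=; apply: eq_bigr => k _; rewrite mulrA.
Qed.

Lemma mxmul1F M : mxmulF (@mxid R T) M = M.
Proof. by apply/funext=> i; apply/funext=> j; apply: mxmulF_delta_row. Qed.

Lemma mxmulF1 M : mxmulF M (@mxid R T) = M.
Proof.
apply/funext=> i; apply/funext=> j; rewrite /mxmulF /mxid.
under eq_bigr do rewrite mulrC eq_sym.
by rewrite sum_delta.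
Qed.

Lemma mxpowFS M n : mxpowF M n.+1 = mxmulF M (mxpowF M n).
Proof. by []. Qed.

Lemma mxpowF_add M m n : mxpowF M (m + n) = mxmulF (mxpowF M m) (mxpowF M n).
Proof. by elim: m => [|m IHm] /=; rewrite ?mxmul1F // IHm mxmulFA. Qed.

Lemma mxmulF_gt0P M N i j :
  (forall i j, 0 <= M i j) -> (forall i j, 0 <= N i j) ->
  0 < mxmulF M N i j -> exists k, 0 < M i k /\ 0 < N k j.
Proof.
move=> M_ge0 N_ge0; apply: contraPP => /forallNP nok.
rewrite /mxmulF big1 ?ltxx // => k _.
have [->|Mik] := eqVneq (M i k) 0; first by rewrite mul0r.
have [->|Nkj] := eqVneq (N k j) 0; first by rewrite mulr0.
by case: (nok k); rewrite !lt0r Mik Nkj M_ge0 N_ge0.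
Qed.

Lemma mxmulF_gt0 M N i k j :
  (forall i j, 0 <= M i j) -> (forall i j, 0 <= N i j) ->
  0 < M i k -> 0 < N k j -> 0 < mxmulF M N i j.
Proof.
move=> M_ge0 N_ge0 Mik Nkj; rewrite /mxmulF (bigD1 k) //=.
apply: (lt_le_trans (mulr_gt0 Mik Nkj)); rewrite lerDl.
by apply: sumr_ge0 => l _; apply: mulr_ge0.
Qed.

Lemma mxfun_stochastic f : stochastic (mxfun f).
Proof.
split=> [i j|i]; first exact: ler0n.
by rewrite /mxfun; under eq_bigr do rewrite -[(_ == _)%:R]mulr1; rewrite sum_delta.
Qed.

Lemma stochastic_mxmulF M N :
  stochastic M -> stochastic N -> stochastic (mxmulF M N).
Proof.
move=> [M_ge0 M1] [N_ge0 N1]; split.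
  by move=> i j; apply: sumr_ge0 => l _; apply: mulr_ge0.
move=> i; rewrite /mxmulF exchange_big /= -(M1 i); apply: eq_bigr => k _.
by rewrite -big_distrr /= N1 mulr1.
Qed.

Lemma stochastic_mxpowF M n : stochastic M -> stochastic (mxpowF M n).
Proof.
move=> M_st; elim: n => [|n IHn] /=; last exact: stochastic_mxmulF.
exact: (mxfun_stochastic id).
Qed.

Lemma stochastic_row_gt0 M i : stochastic M -> exists j, 0 < M i j.
Proof.
move=> [M_ge0 M1]; apply: contrapT => /forallNP noj.
have := M1 i; rewrite big1 => [/eqP|j _]; first by rewrite eq_sym oner_eq0.
by apply/eqP; rewrite eq_le M_ge0 andbT leNgt; apply/negP => /noj.
Qed.

Lemma stochastic_absorbing M i :
  stochastic M -> (forall j, 0 < M i j -> j = i) -> absorbing M i.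
Proof.
move=> [M_ge0 M1] Mi_i.
have Mij0 j : j != i -> M i j = 0.
  by move=> ji; apply/eqP; rewrite eq_le M_ge0 andbT leNgt; apply: contra ji => /Mi_i ->.
move=> j; have [<-|ij] := eqVneq i j; last by rewrite Mij0 // eq_sym.
by rewrite -(M1 i) (bigD1 i) //= big1 ?addr0 // => k /Mij0.
Qed.

Lemma absorbing_mxpowF M s n : absorbing M s -> absorbing (mxpowF M n) s.
Proof.
by move=> Ms; elim: n => [|n IHn] s' //=; rewrite (mxmulF_delta_row _ Ms).
Qed.

Lemma mxpowF_gt0_trans M m n i k j : stochastic M ->
  0 < mxpowF M m i k -> 0 < mxpowF M n k j -> 0 < mxpowF M (m + n) i j.
Proof.
move=> M_st; rewrite mxpowF_add.
by apply: mxmulF_gt0 => *; apply: (stochastic_mxpowF _ M_st).1.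
Qed.

End MatrixAlgebra.

Arguments mxfun {R T} f.

Section SmallStep.
Variables (R : realType) (Pk : finType) (B : mat R {set Pk}).
Hypothesis hB : bigstep_like B.

Local Notation S := (smallstep B).
Local Notation U := (Umx B).
Local Notation SU := (mxmulF S U).

Lemma smallstep_stochastic : stochastic S.
Proof.
have [[B_ge0 B1] _] := hB; split.
  by move=> s s'; apply: mulr_ge0; rewrite ?ler0n ?B_ge0.
move=> [a b]; rewrite -(B1 a) /smallstep /=.
rewrite -(pair_big xpredT xpredT (fun a' b' => (b' == b :|: a)%:R * B a a')) /=.
apply: eq_bigr => a' _; rewrite -big_distrl /=.
by under eq_bigr do rewrite eq_sym -[(_ == _)%:R]mulr1; rewrite sum_delta mul1r.
Qed.

Lemma smallstep_gt0_snd s s' : 0 < S s s' -> s'.2 = s.2 :|: s.1.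
Proof. by rewrite /smallstep; case: eqP => // _; rewrite mul0r ltxx. Qed.

Lemma smallstep_absorbing_set0 b : absorbing S (set0, b).
Proof.
have [_ B0] := hB; move=> [a' b']; rewrite /smallstep /= setU0 B0.
by rewrite -natrM mulnb xpair_eqE andbC eq_sym [b' == b]eq_sym.
Qed.

Lemma reach_snd_subset n s s' : 0 < mxpowF S n s s' -> s.2 \subset s'.2.
Proof.
elim: n s => [|n IHn] s /=.
  by rewrite /mxid; case: eqP => [->|]; rewrite ?subxx ?ltxx.
have Sn_ge0 := (stochastic_mxpowF n smallstep_stochastic).1.
case/(mxmulF_gt0P smallstep_stochastic.1 Sn_ge0) => k [Ssk /IHn k_s'].
by apply: subset_trans k_s'; rewrite (smallstep_gt0_snd Ssk) subsetUl.
Qed.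

Lemma absorbing_saturated s : absorbing S s -> saturated B s.
Proof.
by move=> Ss n s'; rewrite (absorbing_mxpowF n Ss); case: eqP => [->|]; rewrite ?ltxx.
Qed.

Lemma saturated_reach n s s' :
  saturated B s -> 0 < mxpowF S n s s' -> saturated B s' /\ s'.2 = s.2.
Proof.
move=> sat_s Sn_ss'; split; last exact: sat_s Sn_ss'.
move=> m s'' Sm_s's''; rewrite (sat_s _ _ Sn_ss').
exact: sat_s (mxpowF_gt0_trans smallstep_stochastic Sn_ss' Sm_s's'').
Qed.

Lemma reach_saturated s : exists n s', 0 < mxpowF S n.+1 s s' /\ saturated B s'.
Proof.
have [m] := ubnP #|~: s.2|; elim: m s => // m IHm s ltm.
have [sat_s|] := pselect (saturated B s).
  have [s' Sss'] := stochastic_row_gt0 s smallstep_stochastic.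
  have S1ss' : 0 < mxpowF S 1 s s' by rewrite /= mxmulF1.
  by exists 0%N, s'; split => //; case: (saturated_reach sat_s S1ss').
move=> /existsNP[n /existsNP[s' /not_implyP[Sn_ss' ne]]].
have lt_s' : ~: s'.2 \proper ~: s.2.
  by rewrite properC properEneq (reach_snd_subset Sn_ss') andbT eq_sym; apply/eqP.
have [n' [s'' [Sn'_s's'' sat_s'']]] := IHm s' (leq_trans (proper_card lt_s') ltm).
exists (n + n')%N, s''; split => //; rewrite -addnS.
exact: mxpowF_gt0_trans smallstep_stochastic Sn_ss' Sn'_s's''.
Qed.

Definition Utarget (s : state Pk) : state Pk :=
  if `[< saturated B s >] then (set0, s.2) else s.

Lemma UmxE : U = mxfun Utarget.
Proof.
apply/funext=> [[a b]]; apply/funext=> [[a' b']].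
by rewrite /Umx /mxfun /Utarget; case: asboolP => _ /=; rewrite xpair_eqE andbC;
  congr (_ && _)%:R; apply: eq_sym.
Qed.

Lemma Umx_stochastic : stochastic U.
Proof. by rewrite UmxE; apply: mxfun_stochastic. Qed.

Lemma Utarget_saturated s : saturated B s -> Utarget s = (set0, s.2).
Proof. by move=> sat_s; rewrite /Utarget asboolT. Qed.

Lemma Utarget_set0 b : Utarget (set0, b) = (set0, b).
Proof. exact/Utarget_saturated/absorbing_saturated/smallstep_absorbing_set0. Qed.

Lemma saturated_reach_Utarget n s s' :
  saturated B s -> 0 < mxpowF S n s s' -> Utarget s' = (set0, s.2).
Proof.
by move=> sat_s /(saturated_reach sat_s)[sat_s' <-]; apply: Utarget_saturated.
Qed.

Lemma Umx_mxmulF_mxpowF_Umx n :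
  mxmulF U (mxmulF (mxpowF S n) U) = mxmulF (mxpowF S n) U.
Proof.
have [Sn_ge0 Sn1] := stochastic_mxpowF n smallstep_stochastic.
apply/funext=> s; apply/funext=> s'; rewrite {1}UmxE.
rewrite (mxmulF_delta_row _ (t := Utarget s)) // {1}/Utarget.
case: asboolP => [sat_s|//].
rewrite (mxmulF_delta_row _ (absorbing_mxpowF n (smallstep_absorbing_set0 s.2))).
rewrite UmxE /mxmulF /mxfun Utarget_set0.
rewrite (eq_bigr (fun k => mxpowF S n s k * ((set0, s.2) == s')%:R)).
  by rewrite -big_distrl /= Sn1 mul1r.
move=> k _; have [->|Sn_sk] := eqVneq (mxpowF S n s k) 0; first by rewrite !mul0r.
by rewrite (saturated_reach_Utarget (n := n) sat_s) // lt0r Sn_sk Sn_ge0.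
Qed.

Lemma mxpowF_SU n : (0 < n)%N -> mxpowF SU n = mxmulF (mxpowF S n) U.
Proof.
case: n => // n _; elim: n => [|n IHn]; first by rewrite /= !mxmulF1.
by rewrite mxpowFS IHn mxmulFA Umx_mxmulF_mxpowF_Umx -mxmulFA.
Qed.

Lemma set0_absorbing_SU s : s.1 = set0 -> absorbing SU s.
Proof.
case: s => _ b /= ->; move=> s'.
by rewrite (mxmulF_delta_row _ (smallstep_absorbing_set0 b)) UmxE /mxfun Utarget_set0.
Qed.

Lemma absorbing_SU_fst s : absorbing SU s -> s.1 = set0.
Proof.
move=> SU_s; apply/eqP; apply: contraT => s1_neq0.
have succ_s k : 0 < S s k -> k = s /\ ~ saturated B k.
  move=> Ssk; have : 0 < SU s (Utarget k).
    apply: mxmulF_gt0 Ssk _; [exact: smallstep_stochastic.1 | exact: Umx_stochastic.1 |].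
    by rewrite UmxE /mxfun eqxx ltr01.
  rewrite SU_s ltr0n lt0b /Utarget => /eqP.
  case: asboolP => [_ s_eq|nsat_k ->] //.
  by move: s1_neq0; rewrite s_eq eqxx.
have S_s : absorbing S s.
  by apply: stochastic_absorbing smallstep_stochastic _ => k /succ_s[].
have [k /succ_s[-> nsat_s]] := stochastic_row_gt0 s smallstep_stochastic.
by case: (nsat_s (absorbing_saturated S_s)).
Qed.

Lemma reach_absorbing_SU s :
  exists n s', absorbing SU s' /\ 0 < mxpowF SU n s s'.
Proof.
have [n [s' [Sn_ss' sat_s']]] := reach_saturated s.
exists n.+1, (set0, s'.2); split; first exact: set0_absorbing_SU.
rewrite mxpowF_SU //; apply: mxmulF_gt0 Sn_ss' _.
- exact: (stochastic_mxpowF _ smallstep_stochastic).1.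
- exact: Umx_stochastic.1.
- by rewrite UmxE /mxfun Utarget_saturated // eqxx ltr01.
Qed.

End SmallStep.

Unset Implicit Arguments.

Theorem proposition4p6 (R : realType) (Pk : finType) (B : mat R {set Pk})
  (hB : bigstep_like B) :
  (forall n : nat, (0 < n)%N ->
     mxpowF (mxmulF (smallstep B) (Umx B)) n
     = mxmulF (mxpowF (smallstep B) n) (Umx B))
  /\ absorbing_chain (mxmulF (smallstep B) (Umx B))
  /\ (forall s : state Pk,
        absorbing (mxmulF (smallstep B) (Umx B)) s <-> s.1 = set0).
Proof.
split; first exact: mxpowF_SU.
split; first split.
- exact: stochastic_mxmulF (smallstep_stochastic hB) (Umx_stochastic B).
- exact: reach_absorbing_SU.
- by move=> s; split; [apply: absorbing_SU_fst | apply: set0_absorbing_SU].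
Qed.
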